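(* Let $n\ge 2$, let $A_1,\dots,A_n$ be $n$ pairwise distinct points in the plane, and let $\Gamma$ be a circle with centre $O$. Suppose that for every $k\in\{1,2,\dots,n-1\}$ the quantity $\sum_{i=1}^n |PA_i|^{2k}$ does not depend on the position of the point $P\in\Gamma$. Then $A_1,\dots,A_n$ are the vertices of a regular $n$-gon inscribed in a circle centred at $O$.
   Context: $|PA|$ denotes Euclidean distance. For $n=2$ a ''regular $2$-gon inscribed in a circle centred at $O$'' means two distinct points symmetric with respect to $O$. *)

From Stdlib Require Import Reals Lra Lia.
Open Scope R_scope.

Definition point := (R * R)%type.

Definition dist2 (P Q : point) : R :=
  (fst P - fst Q) ^ 2 + (snd P - snd Q) ^ 2.

Fixpoint sumn (n : nat) (f : nat -> R) : R :=
  match n with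
  | O => 0
  | S m => sumn m f + f m
  end.

Definition on_circle (O : point) (r : R) (P : point) : Prop :=
  dist2 P O = r ^ 2.

Definition ngon_vertex (O : point) (rho theta : R) (n j : nat) : point :=
  (fst O + rho * cos (theta + 2 * PI * INR j / INR n),
   snd O + rho * sin (theta + 2 * PI * INR j / INR n)).

(* A_0, ..., A_{n-1} are (in some order) the vertices of a regular n-gon
   inscribed in a circle centred at O (of positive radius). *)
Definition regular_ngon_centred (O : point) (n : nat) (A : nat -> point) : Prop :=
  exists (rho theta : R) (sigma : nat -> nat),
    0 < rho /\
    (forall i, (i < n)%nat -> (sigma i < n)%nat) /\
    (forall i j, (i < n)%nat -> (j < n)%nat -> sigma i = sigma j -> i = j) /\
    (forall i, (i < n)%nat -> A i = ngon_vertex O rho theta n (sigma i)).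

From Pilot Require Import Defs.
From Stdlib Require Import Reals Lra Lia ZArith ClassicalEpsilon.
Open Scope R_scope.

(* Identify the plane with C, taking O as origin, and let z_i be the affix of
   A_i.  The proof has three steps.
   1. Parametrize the circle by P(s) = O + r ((1 - s^2), 2 s) / (1 + s^2).  Then
      (1 + s^2) |P(s) A_i|^2 = Q_i(s) for a quadratic polynomial Q_i, so the
      hypothesis reads sum_i Q_i(s)^k = C (1 + s^2)^k for all real s, hence as
      an identity of complex polynomials.  At s = i the factor 1 + s^2 vanishes
      while Q_i(i) = -4 r z_i: the power sums sum_i z_i^k vanish, 0 < k < n.
   2. Newton's identities: then prod_j (X - z_j) = X^n + q_0, so all the z_i^n
      are equal to -q_0.
   3. This common value is nonzero since the A_i are distinct and n >= 2, so in
      polar form the z_i have a common modulus and n-fold angles congruent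
      modulo 2 PI: each A_i is a vertex of one regular n-gon centred at O. *)

Definition moments_constant_on_circle (n : nat) (A : nat -> point) (O : point) (r : R) : Prop :=
  forall k : nat, (1 <= k)%nat -> (k <= n - 1)%nat ->
    forall P Q : point, on_circle O r P -> on_circle O r Q ->
      sumn n (fun i => dist2 P (A i) ^ k) = sumn n (fun i => dist2 Q (A i) ^ k).

Lemma polar_decomposition (u v : R) : u <> 0 \/ v <> 0 ->
  exists rho phi, 0 < rho /\ u = rho * cos phi /\ v = rho * sin phi.
Proof.
intros Huv.
assert (Hpos : 0 < u * u + v * v).
{ destruct Huv as [H|H]; [pose proof (Rsqr_pos_lt u H) | pose proof (Rsqr_pos_lt v H)];
  unfold Rsqr in *; nra. }
set (rho := sqrt (u * u + v * v)).
assert (Hrho : 0 < rho) by (apply sqrt_lt_R0; exact Hpos).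
assert (Hrho2 : rho * rho = u * u + v * v) by (apply sqrt_sqrt; lra).
set (c := u / rho).
assert (Hu : u = rho * c) by (unfold c; field; lra).
assert (Hc : -1 <= c <= 1).
{ assert (c * c <= 1).
  { apply Rmult_le_reg_l with (rho * rho); [nra|].
    replace (rho * rho * (c * c)) with (u * u) by (rewrite Hu; ring). nra. }
  split; nra. }
(* |v| = rho * sqrt (1 - c^2) = rho * |sin (acos c)| *)
assert (Hv : rho * sqrt (1 - c²) = Rabs v).
{ rewrite <- (sqrt_Rsqr rho), <- sqrt_mult_alt, <- sqrt_Rsqr_abs by (unfold Rsqr; nra).
  f_equal. unfold Rsqr. rewrite Hu in Hrho2. nra. }
destruct (Rle_dec 0 v) as [Hv0|Hv0].
- exists rho, (acos c). rewrite cos_acos, sin_acos, Hv, Rabs_right by lra. lra.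
- exists rho, (- acos c).
  rewrite cos_neg, sin_neg, cos_acos, sin_acos, Ropp_mult_distr_r_reverse, Hv,
    Rabs_left by lra. lra.
Qed.

Lemma cos_eq_1_multiple (t : R) : cos t = 1 -> exists m : Z, t = 2 * IZR m * PI.
Proof.
intros Hcos.
assert (Hsin : sin (t / 2) = 0).
{ pose proof (cos_2a_sin (t / 2)) as E. replace (2 * (t / 2)) with t in E by field.
  apply Rsqr_0_uniq. unfold Rsqr. lra. }
destruct (sin_eq_0_0 _ Hsin) as [m Hm]. exists m. lra.
Qed.

Lemma cos_multiple_2PI (m : Z) : cos (2 * IZR m * PI) = 1.
Proof.
replace (2 * IZR m * PI) with (2 * (IZR m * PI)) by ring.
rewrite cos_2a_sin, sin_eq_0_1 by (exists m; reflexivity). ring.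
Qed.

Lemma same_direction (a b : R) : cos (a - b) = 1 -> cos a = cos b /\ sin a = sin b.
Proof.
intros Hcos.
assert (Hsin : sin (a - b) = 0).
{ pose proof (sin2_cos2 (a - b)) as E. rewrite Hcos in E.
  apply Rsqr_0_uniq. unfold Rsqr in *. lra. }
replace b with (a - (a - b)) by ring.
set (d := a - b) in *. rewrite cos_minus, sin_minus, Hcos, Hsin. split; ring.
Qed.

Lemma polar_unique (a b x y : R) : 0 < a -> 0 < b ->
  a * cos x = b * cos y -> a * sin x = b * sin y -> a = b /\ cos (x - y) = 1.
Proof.
intros Ha Hb Hc Hs.
pose proof (sin2_cos2 x) as Nx. pose proof (sin2_cos2 y) as Ny. unfold Rsqr in *.
assert (Hab2 : a * a = b * b).
{ replace (a * a) with ((a * cos x) * (a * cos x) + (a * sin x) * (a * sin x))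
    by (transitivity (a * a * (sin x * sin x + cos x * cos x)); [ring | rewrite Nx; ring]).
  rewrite Hc, Hs.
  transitivity (b * b * (sin y * sin y + cos y * cos y)); [ring | rewrite Ny; ring]. }
assert (Hab : a = b) by nra. subst b.
assert (Hcxy : cos x = cos y) by (apply Rmult_eq_reg_l with a; lra).
assert (Hsxy : sin x = sin y) by (apply Rmult_eq_reg_l with a; lra).
split; [reflexivity|]. rewrite cos_minus, Hcxy, Hsxy. lra.
Qed.

Lemma polar_point_is_vertex (O P : point) (n : nat) (rho theta phi : R) :
  (0 < n)%nat ->
  fst P - fst O = rho * cos phi -> snd P - snd O = rho * sin phi ->
  cos (INR n * phi - INR n * theta) = 1 ->
  exists m, (m < n)%nat /\ P = ngon_vertex O rho theta n m.
Proof.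
intros Hn Hx Hy Hcos.
assert (HnR : INR n <> 0) by (apply not_0_INR; lia).
destruct (cos_eq_1_multiple _ Hcos) as [M HM].
(* Write M = n q + m with 0 <= m < n. *)
set (m := Z.to_nat (M mod Z.of_nat n)).
set (q := (M / Z.of_nat n)%Z).
assert (Hm : (0 <= M mod Z.of_nat n < Z.of_nat n)%Z) by (apply Z.mod_pos_bound; lia).
assert (HMqm : IZR M = INR n * IZR q + INR m).
{ unfold m, q. rewrite !INR_IZR_INZ, Z2Nat.id by lia.
  rewrite <- mult_IZR, <- plus_IZR. f_equal. apply Z.div_mod. lia. }
exists m. split; [unfold m; lia|].
assert (Hangle : phi - (theta + 2 * PI * INR m / INR n) = 2 * IZR q * PI).
{ apply Rmult_eq_reg_l with (INR n); [|exact HnR].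
  replace (INR n * (phi - (theta + 2 * PI * INR m / INR n)))
    with (INR n * phi - INR n * theta - 2 * PI * INR m) by (field; exact HnR).
  rewrite HM, HMqm. ring. }
assert (Hdir : cos (phi - (theta + 2 * PI * INR m / INR n)) = 1)
  by (rewrite Hangle; apply cos_multiple_2PI).
destruct (same_direction _ _ Hdir) as [Hc Hs].
unfold ngon_vertex. rewrite <- Hc, <- Hs, <- Hx, <- Hy.
destruct P; simpl; f_equal; ring.
Qed.

Lemma regular_ngon_of_vertices (O : point) (n : nat) (A : nat -> point) (rho theta : R) :
  0 < rho ->
  (forall i j, (i < n)%nat -> (j < n)%nat -> i <> j -> A i <> A j) ->
  (forall i, (i < n)%nat -> exists m, (m < n)%nat /\ A i = ngon_vertex O rho theta n m) ->
  regular_ngon_centred O n A.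
Proof.
intros Hrho Hdist Hvert.
destruct (choice (fun i m => (i < n)%nat -> (m < n)%nat /\ A i = ngon_vertex O rho theta n m))
  as [sigma Hsigma].
{ intros i. destruct (Nat.lt_ge_cases i n) as [Hi|Hi].
  - destruct (Hvert i Hi) as [m Hm]. exists m. intros _. exact Hm.
  - exists 0%nat. lia. }
exists rho, theta, sigma. repeat split; [exact Hrho | | |].
- intros i Hi. apply (Hsigma i Hi).
- intros i j Hi Hj Hij. destruct (Nat.eq_dec i j) as [e|ne]; [exact e|].
  exfalso. apply (Hdist i j Hi Hj ne).
  rewrite (proj2 (Hsigma i Hi)), (proj2 (Hsigma j Hj)), Hij. reflexivity.
- intros i Hi. apply (Hsigma i Hi).
Qed.

From mathcomp Require all_boot all_order all_algebra complex Rstruct ring lra.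

Module PowerSumMethod.
Import all_boot all_order all_algebra complex Rstruct ring lra.
Import Order.TTheory GRing.Theory Num.Theory.
Local Set Implicit Arguments.
Local Unset Strict Implicit.
Local Open Scope ring_scope.

Definition power_sums_vanish {F : numDomainType} (n : nat) (a : nat -> F) : Prop :=
  forall m, (0 < m < n)%N -> \sum_(0 <= i < n) a i ^+ m = 0.

Definition equal_nth_powers {F : numDomainType} (n : nat) (a : nat -> F) : Prop :=
  forall i j, (i < n)%N -> (j < n)%N -> a i ^+ n = a j ^+ n.

Lemma deriv_prod_XsubC (F : comNzRingType) (a : nat -> F) (n : nat) :
  (\prod_(0 <= j < n) ('X - (a j)%:P))^`() =
  \sum_(0 <= i < n) \prod_(0 <= j < n | j != i) ('X - (a j)%:P).
Proof.
elim: n => [|n IH]; first by rewrite !big_geq // derivC.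
rewrite big_nat_recr //= derivM IH derivXsubC mulr1 big_nat_recr //=.
rewrite [X in _ = _ + X]big_mkcond big_nat_recr //= eqxx mulr1.
rewrite [X in _ = _ + X](eq_big_nat _ _ (F2 := fun j => 'X - (a j)%:P)); last first.
  by move=> j /andP[_ hj]; rewrite (ltn_eqF hj).
congr (_ + _); rewrite mulr_suml; apply: eq_big_nat => i /andP[_ hi].
by rewrite [in RHS]big_mkcond big_nat_recr //= (gtn_eqF hi) -big_mkcond.
Qed.

Lemma coef_quotient_XsubC (F : comNzRingType) (q D : {poly F}) (c : F) t u :
  q = ('X - c%:P) * D ->
  D`_t = \sum_(j < u) q`_(t + j).+1 * c ^+ j + c ^+ u * D`_(t + u).
Proof.
move=> hq; elim: u => [|u IH]; first by rewrite big_ord0 add0r expr0 mul1r addn0.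
have hcoef s : q`_s.+1 = D`_s - c * D`_s.+1.
  by rewrite hq mulrBl coefB coefXM coefCM.
by rewrite IH big_ord_recr /= hcoef addnS exprS; ring.
Qed.

Section Newton.
Variables (F : numDomainType) (n : nat) (a : nat -> F).
Hypothesis power_sums0 : power_sums_vanish n a.

Let q : {poly F} := \prod_(0 <= j < n) ('X - (a j)%:P).
Let D (i : nat) : {poly F} := \prod_(0 <= j < n | j != i) ('X - (a j)%:P).

Let q_factor i : (i < n)%N -> q = ('X - (a i)%:P) * D i.
Proof. by move=> hi; rewrite /q (bigD1_seq i) ?mem_index_iota ?iota_uniq. Qed.

Let size_q : size q = n.+1.
Proof.
rewrite /q /index_iota subn0 -(big_map a xpredT (fun x => 'X - x%:P)).
by rewrite size_prod_XsubC size_map size_iota.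
Qed.

Let coef_D i t : (i < n)%N -> (D i)`_t = \sum_(j < n) q`_(t + j).+1 * a i ^+ j.
Proof.
move=> hi; rewrite (coef_quotient_XsubC t n (q_factor hi)).
have size_D : size (D i) = n.
  have Dn0 : D i != 0.
    by apply/eqP => D0; move: size_q; rewrite (q_factor hi) D0 mulr0 size_poly0.
  by move: size_q; rewrite (q_factor hi) size_mul ?polyXsubC_eq0 // size_XsubC; case.
by rewrite [X in _ + _ * X]nth_default ?mulr0 ?addr0 // size_D leq_addl.
Qed.

(* Comparing coefficients in q' = sum_i D_i gives (t+1) q_(t+1) = n q_(t+1). *)
Let coef_deriv_q t : q`_t.+1 *+ t.+1 = q`_t.+1 *+ n.
Proof.
rewrite -coef_deriv deriv_prod_XsubC -/q coef_sum.
rewrite (eq_big_nat _ _ (F2 := fun i => \sum_(j < n) q`_(t + j).+1 * a i ^+ j));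
  last by move=> i /andP[_ hi]; rewrite coef_D.
rewrite exchange_big /=; case: n power_sums0 => [|n'] hp; first by rewrite big_ord0.
rewrite big_ord_recl /= addn0 [X in _ + X]big1 ?addr0; last first.
  by move=> j _; rewrite -mulr_sumr hp ?mulr0 //= ltnS ltn_ord.
rewrite -mulr_sumr (eq_bigr (fun _ => 1)) ?sumr_const_nat ?subn0 ?mulr_natr //.
Qed.

Let coef_q_mid m : (0 < m < n)%N -> q`_m = 0.
Proof.
case: m => [//|m] /andP[_ hm]; move: (coef_deriv_q m) => /eqP.
rewrite eq_sym -subr_eq0 -mulrnBr ?(ltnW hm) // mulrn_eq0 subn_eq0 leqNgt hm.
by move/eqP.
Qed.

(* Since q = X^n + q_0 and q(a_i) = 0, a_i^n = - q_0. *)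
Lemma nth_power_of_vanishing_power_sums i : (i < n)%N -> a i ^+ n = - q`_0.
Proof.
move=> hi; have : q.[a i] = 0 by rewrite (q_factor hi) hornerM hornerXsubC subrr mul0r.
rewrite horner_coef size_q big_ord_recr /=.
have -> : q`_n = 1.
  by have /monicP := monic_prod_XsubC (index_iota 0 n) xpredT a; rewrite /lead_coef size_q.
case: n hi coef_q_mid => [//|n'] _ hmid.
rewrite big_ord_recl big1 ?expr0 ?mulr1 ?addr0 ?mul1r => [/eqP|j _].
  by rewrite addrC addr_eq0 => /eqP.
by rewrite hmid ?mul0r //= /bump leq0n add1n !ltnS ltn_ord.
Qed.

End Newton.

Lemma equal_nth_powers_of_vanishing_power_sums (F : numDomainType) n (a : nat -> F) :
  power_sums_vanish n a -> equal_nth_powers n a.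
Proof.
by move=> hp i j hi hj; rewrite !(nth_power_of_vanishing_power_sums hp).
Qed.

Lemma sumn_bigop (n : nat) (f : nat -> R) : Defs.sumn n f = \sum_(0 <= i < n) f i.
Proof. by elim: n => [|n IH]; [rewrite big_geq | rewrite big_nat_recr //= IH]. Qed.

Local Open Scope complex_scope.

Lemma poly_eq0_on_reals (p : {poly R[i]}) : (forall s : R, p.[s%:C] = 0) -> p = 0.
Proof.
move=> p0; apply: (@roots_geq_poly_eq0 _ p [seq (i%:R : R)%:C | i <- iota 0 (size p)]).
- by apply/allP => z /mapP[i _ ->]; apply/rootP.
- by rewrite map_inj_uniq ?iota_uniq // => i j /complexI /eqP; rewrite eqr_nat => /eqP.
- by rewrite size_map size_iota.
Qed.

Definition affix (O P : point) : R[i] := (fst P - fst O) +i* (snd P - snd O).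

Lemma affix_eq0 (O P : point) : affix O P = 0 -> P = O.
Proof.
case: P O => [x y] [x0 y0] [/= /subr0_eq -> /subr0_eq ->]. by [].
Qed.

Definition circle_point (O : point) (r s : R) : point :=
  (fst O + r * (1 - s ^+ 2) / (1 + s ^+ 2), snd O + r * (2 * s) / (1 + s ^+ 2)).

Lemma one_plus_sqr_neq0 (s : R) : 1 + s ^+ 2 != 0.
Proof. by apply: lt0r_neq0; have := sqr_ge0 s; lra. Qed.

Lemma circle_point_on_circle (O : point) (r s : R) : on_circle O r (circle_point O r s).
Proof.
have := one_plus_sqr_neq0 s.
rewrite /on_circle /dist2 !RpowE /= !RminusE !RplusE => s0; field; exact: s0.
Qed.

(* The quadratic Q with Q(s) = (1 + s^2) |P(s) A|^2, as a complex polynomial. *)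
Definition circle_quadratic (O A : point) (r : R) : {poly R[i]} :=
  let u := fst A - fst O in let v := snd A - snd O in
  ((r ^+ 2 + u ^+ 2 + v ^+ 2)%:C)%:P * (1 + 'X ^+ 2)
  - ((2 * r)%:C)%:P * ((u%:C)%:P * (1 - 'X ^+ 2) + ((2 * v)%:C)%:P * 'X).

Lemma circle_quadratic_real (O A : point) (r s : R) :
  (circle_quadratic O A r).[s%:C] = ((1 + s ^+ 2) * dist2 (circle_point O r s) A)%:C.
Proof.
set u := fst A - fst O; set v := snd A - snd O.
have -> : (1 + s ^+ 2) * dist2 (circle_point O r s) A =
    (r ^+ 2 + u ^+ 2 + v ^+ 2) * (1 + s ^+ 2) - 2 * r * (u * (1 - s ^+ 2) + 2 * v * s).
  have := one_plus_sqr_neq0 s.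
  rewrite /dist2 /u /v !RpowE /= !RminusE !RplusE => s0; field; exact: s0.
rewrite /circle_quadratic !hornerE.
by rewrite !(rmorphB, rmorphM, rmorphD, rmorphXn, rmorph1, rmorph_nat).
Qed.

(* At s = i the factor 1 + s^2 vanishes and only the affix survives. *)
Lemma circle_quadratic_i (O A : point) (r : R) :
  (circle_quadratic O A r).['i] = (- (4 * r))%:C * affix O A.
Proof.
rewrite /circle_quadratic /affix !hornerE; apply/eqP; rewrite eq_complex /=; simpc.
by apply/andP; split; apply/eqP; ring.
Qed.

(* If the k-th moment is the constant C on the circle, then
   sum_i Q_i^k = C (1 + X^2)^k as complex polynomials, since both sides agree
   at every real number. *)
Lemma circle_moment_polynomial (n k : nat) (A : nat -> point) (O : point) (r C : R) :
  (forall s : R, \sum_(0 <= i < n) dist2 (circle_point O r s) (A i) ^+ k = C) ->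
  \sum_(0 <= i < n) circle_quadratic O (A i) r ^+ k = (C%:C)%:P * (1 + 'X ^+ 2) ^+ k.
Proof.
move=> moment_k; apply/eqP; rewrite -subr_eq0; apply/eqP/poly_eq0_on_reals => s.
rewrite hornerD hornerN horner_sum.
under eq_bigr do rewrite horner_exp circle_quadratic_real -rmorphXn exprMn.
rewrite -rmorph_sum -mulr_sumr moment_k !hornerE.
by rewrite !(rmorphB, rmorphM, rmorphD, rmorphXn, rmorph1) mulrC subrr.
Qed.

(* Step 1: constant moments force the power sums of the affixes to vanish;
   evaluate the identity above at i, where 1 + X^2 vanishes. *)
Lemma power_sums_vanish_of_constant_moments (n : nat) (A : nat -> point) (O : point) (r : R) :
  Rlt 0 r -> moments_constant_on_circle n A O r ->
  power_sums_vanish n (fun i => affix O (A i)).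
Proof.
move=> /RltP r_gt0 hmom k /andP[k_gt0 /ssrnat.ltP k_lt_n].
pose C := \sum_(0 <= i < n) dist2 (circle_point O r 0) (A i) ^+ k.
have moment_k (s : R) : \sum_(0 <= i < n) dist2 (circle_point O r s) (A i) ^+ k = C.
  have pow_sum (P : point) : \sum_(0 <= i < n) pow (dist2 P (A i)) k =
      \sum_(0 <= i < n) dist2 P (A i) ^+ k by apply: eq_bigr => i _; rewrite RpowE.
  have k1 : (1 <= k)%coq_nat by apply/ssrnat.leP.
  have k2 : (k <= n - 1)%coq_nat by lia.
  have := hmom k k1 k2 _ _ (circle_point_on_circle O r s) (circle_point_on_circle O r 0).
  by rewrite !sumn_bigop !pow_sum.
have := congr1 (horner^~ 'i) (circle_moment_polynomial moment_k).
rewrite horner_sum; under eq_bigr do rewrite horner_exp circle_quadratic_i exprMn.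
rewrite !hornerE sqr_i addrN expr0n eqn0Ngt k_gt0 mulr0 -mulr_sumr => /eqP.
rewrite mulf_eq0 expf_eq0 k_gt0 /= fmorph_eq0 oppr_eq0 mulf_eq0 pnatr_eq0 /=.
by rewrite (negbTE (lt0r_neq0 r_gt0)) => /eqP.
Qed.

Lemma polar_power (rho phi : R) (n : nat) :
  ((rho * cos phi) +i* (rho * sin phi)) ^+ n =
  (rho ^+ n * cos (INR n * phi)) +i* (rho ^+ n * sin (INR n * phi)).
Proof.
elim: n => [|n IH].
  by rewrite !expr0 /= Rmult_0_l cos_0 sin_0; apply/eqP; rewrite eq_complex /=; simpc.
have -> : Rmult (INR n.+1) phi = Rplus phi (Rmult (INR n) phi).
  by rewrite S_INR Rmult_plus_distr_r Rmult_1_l Rplus_comm.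
rewrite exprS IH cos_plus sin_plus !RmultE !RminusE !RplusE.
by apply/eqP; rewrite eq_complex /=; simpc; apply/andP; split; apply/eqP; rewrite exprS; ring.
Qed.

Lemma polar_of_affix (O P : point) : affix O P != 0 ->
  exists rho phi, Rlt 0 rho /\ fst P - fst O = rho * cos phi /\ snd P - snd O = rho * sin phi.
Proof.
move=> z0; apply: polar_decomposition.
have [x0|/eqP x_neq0] := eqVneq (fst P - fst O) 0; first last.
  by left; exact: x_neq0.
have [y0|/eqP y_neq0] := eqVneq (snd P - snd O) 0; first last.
  by right; exact: y_neq0.
by move: z0; rewrite /affix x0 y0 eqxx.
Qed.

(* If n >= 2 distinct points have affixes with a common n-th power, that
   power is nonzero: otherwise all the points would be O. *)
Lemma affix_neq0_of_equal_nth_powers (n : nat) (A : nat -> point) (O : point) :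
  (2 <= n)%coq_nat ->
  (forall i j, (i < n)%coq_nat -> (j < n)%coq_nat -> i <> j -> A i <> A j) ->
  equal_nth_powers n (fun i => affix O (A i)) ->
  forall i, (i < n)%N -> affix O (A i) != 0.
Proof.
move=> /ssrnat.leP n_gt1 hdist hpow i hi; apply/eqP => zi0.
have n_gt0 : (0 < n)%N by apply: ltnW.
have at_centre j : (j < n)%N -> A j = O.
  move=> hj; apply: affix_eq0; apply/eqP.
  have : affix O (A j) ^+ n == 0 by rewrite (hpow j i hj hi) zi0 expr0n eqn0Ngt n_gt0.
  by rewrite expf_eq0 => /andP[].
apply: (hdist 0%N 1%N (ssrnat.ltP n_gt0) (ssrnat.ltP n_gt1)); first by [].
by rewrite !at_centre.
Qed.

(* Step 3: pairwise distinct points whose affixes have a common n-th power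
   (n >= 2) form a regular n-gon centred at O: the common power is nonzero,
   so by De Moivre all points have the same modulus and n-fold angles
   congruent modulo 2 PI. *)
Lemma regular_ngon_of_equal_nth_powers (n : nat) (A : nat -> point) (O : point) :
  (2 <= n)%coq_nat ->
  (forall i j, (i < n)%coq_nat -> (j < n)%coq_nat -> i <> j -> A i <> A j) ->
  equal_nth_powers n (fun i => affix O (A i)) -> regular_ngon_centred O n A.
Proof.
move=> n_ge2 hdist hpow.
have affix_neq0 := affix_neq0_of_equal_nth_powers n_ge2 hdist hpow.
have n_gt0 : (0 < n)%N by move/ssrnat.leP: n_ge2; apply: ltnW.
have [rho [theta [rho_gt0 [x0 y0]]]] := polar_of_affix (affix_neq0 0%N n_gt0).
apply: (regular_ngon_of_vertices O n A rho theta rho_gt0 hdist) => i /ssrnat.ltP hi.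
have [rho' [phi [rho'_gt0 [xi yi]]]] := polar_of_affix (affix_neq0 i hi).
have := hpow i 0%N hi n_gt0; rewrite /affix xi yi x0 y0 !polar_power => -[hre him].
have pos_pow (t : R) : Rlt 0 t -> Rlt 0 (t ^+ n).
  by move=> /RltP t_gt0; apply/RltP; exact: exprn_gt0.
have [eq_pow hcos] := polar_unique _ _ _ _ (pos_pow _ rho'_gt0) (pos_pow _ rho_gt0) hre him.
have eq_rho : rho' = rho.
  by apply/eqP; rewrite -(eqrXn2 n_gt0) ?eq_pow //; apply: ltW; exact/RltP.
apply: (polar_point_is_vertex _ _ _ _ _ phi); first exact/ssrnat.ltP.
- by rewrite -eq_rho; exact: xi.
- by rewrite -eq_rho; exact: yi.
- exact: hcos.
Qed.

End PowerSumMethod.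

(* Points A_1..A_n are indexed as A 0, ..., A (n-1), and
   |PA_i|^{2k} = (dist2 P (A i))^k. *)
Theorem mainTheorem1 (n : nat) (A : nat -> point) (O : point) (r : R) :
  (2 <= n)%nat ->
  0 < r ->
  (forall i j, (i < n)%nat -> (j < n)%nat -> i <> j -> A i <> A j) ->
  (forall k : nat, (1 <= k)%nat -> (k <= n - 1)%nat ->
     forall P Q : point, on_circle O r P -> on_circle O r Q ->
       sumn n (fun i => dist2 P (A i) ^ k) = sumn n (fun i => dist2 Q (A i) ^ k)) ->
  regular_ngon_centred O n A.
Proof.
intros Hn Hr Hdistinct Hmoments.
pose proof (PowerSumMethod.power_sums_vanish_of_constant_moments Hr Hmoments) as Hsums.
pose proof (PowerSumMethod.equal_nth_powers_of_vanishing_power_sums Hsums) as Hpowers.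
exact (PowerSumMethod.regular_ngon_of_equal_nth_powers Hn Hdistinct Hpowers).
Qed.
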